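(* Let $X$ be a well-filtered space whose Smyth power space $P_S(X)$ is first-countable. The following are equivalent: (1) $X$ is locally compact. (2) $\mathsf{K}(X)$ is a continuous semilattice, and $\xi_X^\sigma:X\to\Sigma\,\mathsf{K}(X)$, $x\mapsto\uparrow x$, is continuous. (3) $\mathsf{K}(X)$ is a continuous semilattice, and $X$ has property Q. (4) $\mathsf{K}(X)$ is a continuous semilattice. (5) $X$ is core compact.
   Context: Spaces are $T_0$; specialization order $x\le y$ iff $x\in\overline{\{y\}}$; saturated = upper set. $\mathsf{K}(X)$ = nonempty compact saturated subsets ordered by reverse inclusion (a family has a supremum iff its intersection lies in $\mathsf{K}(X)$, and then it is the intersection). Scott topology on a poset: upper sets $U$ such that every directed $D$ with existing supremum in $U$ meets $U$; $\Sigma Q$ is $Q$ with it. $a\ll b$ means for every directed $D$ with existing $\bigvee D\ge b$ some $d\in D$ has $d\ge a$; $\mathsf{K}(X)$ is a continuous semilattice if it is directed complete and each $K$ is the directed supremum of $\{L:L\ll K\}$. $P_S(X)$: $\mathsf{K}(X)$ with base $\Box U=\{K:K\subseteq U\}$, $U$ open (upper Vietoris topology). Well-filtered: for open $U$ and $\mathcal K\subseteq\mathsf{K}(X)$ filtered under inclusion, $\bigcap\mathcal K\subseteq U$ implies some $K\in\mathcal K$ lies in $U$. Property Q: $K_1\ll K_2$ iff $K_2\subseteq\operatorname{int}K_1$. Locally compact: neighborhood bases of compact sets. Core compact: open-set lattice is continuous. *)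

From Stdlib Require Import List.

Section Top.
Context {X : Type} (O : (X -> Prop) -> Prop).

Definition subset (A B : X -> Prop) : Prop := forall x, A x -> B x.

Definition is_topology : Prop :=
  O (fun _ => True) /\
  (forall U V, O U -> O V -> O (fun x => U x /\ V x)) /\
  (forall F : (X -> Prop) -> Prop, (forall U, F U -> O U) ->
      O (fun x => exists U, F U /\ U x)) /\
  (forall U V, O U -> (forall x, U x <-> V x) -> O V).

Definition T0 : Prop :=
  forall x y, (forall U, O U -> (U x <-> U y)) -> x = y.

Definition spec_le (x y : X) : Prop := forall U, O U -> U x -> U y.

Definition saturated (A : X -> Prop) : Prop :=
  forall x y, A x -> spec_le x y -> A y.

Definition up (x : X) : X -> Prop := fun y => spec_le x y.

Definition compact (A : X -> Prop) : Prop :=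
  forall F : (X -> Prop) -> Prop, (forall U, F U -> O U) ->
    (forall x, A x -> exists U, F U /\ U x) ->
    exists l : list (X -> Prop), (forall U, In U l -> F U) /\
      (forall x, A x -> exists U, In U l /\ U x).

Definition interior (A : X -> Prop) : X -> Prop :=
  fun x => exists U, O U /\ U x /\ subset U A.

Definition inK (A : X -> Prop) : Prop :=
  (exists x, A x) /\ compact A /\ saturated A.

(* K(X) is ordered by reverse inclusion: A ⊑ B iff B ⊆ A.
   A directed subset of K(X) = a family filtered under inclusion. *)
Definition directedK (D : (X -> Prop) -> Prop) : Prop :=
  (forall A, D A -> inK A) /\ (exists A, D A) /\
  (forall A B, D A -> D B -> exists C, D C /\ subset C A /\ subset C B).

Definition is_supK (D : (X -> Prop) -> Prop) (S : X -> Prop) : Prop :=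
  inK S /\ (forall A, D A -> subset S A) /\
  (forall L, inK L -> (forall A, D A -> subset L A) -> subset L S).

Definition way_belowK (A B : X -> Prop) : Prop :=
  forall D S, directedK D -> is_supK D S -> subset S B ->
    exists d, D d /\ subset d A.

Definition continuousK : Prop :=
  (forall D, directedK D -> exists S, is_supK D S) /\
  (forall K, inK K ->
     directedK (fun L => inK L /\ way_belowK L K) /\
     is_supK (fun L => inK L /\ way_belowK L K) K).

Definition scott_openK (W : (X -> Prop) -> Prop) : Prop :=
  (forall A, W A -> inK A) /\
  (forall A B, W A -> inK B -> subset B A -> W B) /\
  (forall D S, directedK D -> is_supK D S -> W S -> exists d, D d /\ W d).

Definition xi_sigma_continuous : Prop :=
  forall W, scott_openK W -> O (fun x => W (up x)).

Definition property_Q : Prop :=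
  forall A B, inK A -> inK B -> (way_belowK A B <-> subset B (interior A)).

Definition well_filtered : Prop :=
  forall (U : X -> Prop) (KK : (X -> Prop) -> Prop),
    O U -> directedK KK ->
    subset (fun x => forall A, KK A -> A x) U ->
    exists A, KK A /\ subset A U.

(* open sets of the Smyth power space P_S(X) (upper Vietoris topology,
   generated by the base  Box U = {K in K(X) | K ⊆ U}, U open) *)
Definition smyth_open (W : (X -> Prop) -> Prop) : Prop :=
  (forall A, W A -> inK A) /\
  (forall K, W K -> exists U, O U /\ subset K U /\
       (forall L, inK L -> subset L U -> W L)).

Definition smyth_first_countable : Prop :=
  forall K, inK K ->
    exists B : nat -> ((X -> Prop) -> Prop),
      (forall n, smyth_open (B n) /\ B n K) /\
      (forall W, smyth_open W -> W K -> exists n, forall L, B n L -> W L).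

Definition locally_compact : Prop :=
  forall x U, O U -> U x ->
    exists V K, O V /\ V x /\ subset V K /\ compact K /\ subset K U.

Definition way_belowO (V U : X -> Prop) : Prop :=
  forall F : (X -> Prop) -> Prop,
    (forall W, F W -> O W) -> (exists W, F W) ->
    (forall W1 W2, F W1 -> F W2 -> exists W3, F W3 /\ subset W1 W3 /\ subset W2 W3) ->
    subset U (fun x => exists W, F W /\ W x) ->
    exists W, F W /\ subset V W.

(* the open-set lattice is continuous: each open U is the join (union)
   of the opens way below it *)
Definition core_compact : Prop :=
  forall U, O U -> forall x, U x <-> exists V, O V /\ way_belowO V U /\ V x.

End Top.

From Stdlib Require Import List Classical ClassicalEpsilon FunctionalExtensionality
  PropExtensionality Arith Lia.
From mathcomp Require classical_sets.

(* Property Q holds in every well-filtered space with first-countable P_S(X): if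
   K is not inside int L, pick y_n outside L from a decreasing countable
   neighbourhood base U_n of K; the sets K ∪ ↑{y_m | m >= n} form a filtered family
   in K(X) with infimum K, and none of them lies in L, so L is not way below K.
   With Q, the way-below approximants of ↑x are compact neighbourhoods of x, so
   continuity of K(X), and with it continuity of ξ, amounts to local compactness.
   For core compact => locally compact, interpolate V ≪ ... ≪ Z_1 ≪ Z_0 = U; the
   intersection of the Z_n is compact: otherwise Zorn gives an open P maximal among
   those containing a given open cover but no Z_n, points z_n ∈ Z_n \ P have compact
   tails ↑{z_m | m >= n}, and well-filteredness yields a point of ⋂ Z_n outside P. *)

Section Topology.
Variable X : Type.
Variable O : (X -> Prop) -> Prop.
Hypothesis HT : is_topology O.

Definition bigU (F : (X -> Prop) -> Prop) : X -> Prop := fun x => exists U, F U /\ U x.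

Definition upset (C : X -> Prop) : X -> Prop := fun z => exists y, C y /\ spec_le O y z.

Definition tail_up (y : nat -> X) (n : nat) : X -> Prop :=
  fun z => exists m, n <= m /\ spec_le O (y m) z.

Definition converges_to (y : nat -> X) (A : X -> Prop) : Prop :=
  forall W, O W -> subset A W -> exists N, forall m, N <= m -> W (y m).

Lemma open_ext U V : O U -> (forall x, U x <-> V x) -> O V.
Proof. destruct HT as (_ & _ & _ & H); eauto. Qed.

Lemma open_bigU F : (forall U, F U -> O U) -> O (bigU F).
Proof. destruct HT as (_ & _ & H & _); apply H. Qed.

Lemma open_and U V : O U -> O V -> O (fun x => U x /\ V x).
Proof. destruct HT as (_ & H & _ & _); apply H. Qed.

Lemma open_full : O (fun _ => True).
Proof. destruct HT as (H & _ & _ & _); exact H. Qed.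

Lemma open_empty : O (fun _ => False).
Proof.
  apply (open_ext (bigU (fun _ => False))); [apply open_bigU; tauto |].
  intro x; split; [intros (U & [] & _) | intros []].
Qed.

Lemma open_or U V : O U -> O V -> O (fun x => U x \/ V x).
Proof.
  intros HU HV; apply (open_ext (bigU (fun W => W = U \/ W = V))).
  - apply open_bigU; intros W [-> | ->]; assumption.
  - intro x; split.
    + intros (W & [-> | ->] & H); auto.
    + intros [H | H]; [exists U | exists V]; auto.
Qed.

Lemma open_list_union (l : list (X -> Prop)) :
  (forall U, In U l -> O U) -> O (fun x => exists U, In U l /\ U x).
Proof. exact (open_bigU (fun U => In U l)). Qed.

Lemma open_of_nbhds S : (forall x, S x -> exists V, O V /\ V x /\ subset V S) -> O S.
Proof.
  intro H; apply (open_ext (bigU (fun V => O V /\ subset V S))).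
  - apply open_bigU; tauto.
  - intro x; split.
    + intros (V & (_ & HVS) & Hx); auto.
    + intro Hx; destruct (H x Hx) as (V & HV & HVx & HVS); exists V; auto.
Qed.

Lemma spec_refl x : spec_le O x x.
Proof. intros U _ H; exact H. Qed.

Lemma spec_trans x y z : spec_le O x y -> spec_le O y z -> spec_le O x z.
Proof. intros Hxy Hyz U HU Hx; exact (Hyz U HU (Hxy U HU Hx)). Qed.

Lemma interior_open A : O (interior O A).
Proof.
  apply open_of_nbhds; intros x (U & HU & Hx & HUA).
  exists U; split; [exact HU | split; [exact Hx |]].
  intros y Hy; exists U; auto.
Qed.

Lemma interior_sub A : subset (interior O A) A.
Proof. intros x (U & _ & Hx & HUA); auto. Qed.

Lemma up_inK x : inK O (up O x).
Proof.
  split; [exists x; apply spec_refl | split].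
  - intros F HF Hcov; destruct (Hcov x (spec_refl x)) as (U & HU & HUx).
    exists (U :: nil); split.
    + intros V [<- | []]; exact HU.
    + intros y Hy; exists U; split; [left; reflexivity | exact (Hy U (HF U HU) HUx)].
  - intros y z Hy Hz; eapply spec_trans; eauto.
Qed.

Lemma saturated_separate B z :
  saturated O B -> ~ B z -> exists W, O W /\ subset B W /\ ~ W z.
Proof.
  intros HB Hz; exists (bigU (fun U => O U /\ ~ U z)); split; [|split].
  - apply open_bigU; tauto.
  - intros b Hb; apply NNPP; intro Hn; apply Hz, (HB b z Hb).
    intros U HU HUb; apply NNPP; intro HUz; apply Hn; exists U; auto.
  - intros (U & (_ & HUz) & HU); auto.
Qed.

Lemma compact_ext A B : (forall x, A x <-> B x) -> compact O A -> compact O B.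
Proof.
  intros HAB HA F HF Hcov; destruct (HA F HF) as (l & Hl & Hcl).
  - intros x Hx; apply Hcov, HAB, Hx.
  - exists l; split; [exact Hl | intros x Hx; apply Hcl, HAB, Hx].
Qed.

Lemma inK_ext A B : (forall x, A x <-> B x) -> inK O A -> inK O B.
Proof.
  intros HAB ((a & Ha) & HAc & HAs); split; [exists a; apply HAB, Ha | split].
  - exact (compact_ext A B HAB HAc).
  - intros x y Hx Hxy; apply HAB, (HAs x y); [apply HAB, Hx | exact Hxy].
Qed.

Lemma compact_empty : compact O (fun _ => False).
Proof. intros F _ _; exists nil; split; [intros U [] | intros x []]. Qed.

Lemma compact_or A B : compact O A -> compact O B -> compact O (fun x => A x \/ B x).
Proof.
  intros HA HB F HF Hcov.
  destruct (HA F HF) as (la & Hla & Hca); [intros x Hx; apply Hcov; auto |].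
  destruct (HB F HF) as (lb & Hlb & Hcb); [intros x Hx; apply Hcov; auto |].
  exists (la ++ lb); split.
  - intros U HU; apply in_app_or in HU; destruct HU; auto.
  - intros x [Hx | Hx];
      [destruct (Hca x Hx) as (U & HU & HUx) | destruct (Hcb x Hx) as (U & HU & HUx)];
      exists U; split; auto; apply in_or_app; auto.
Qed.

Lemma compact_upset C : compact O C -> compact O (upset C).
Proof.
  intros HC F HF Hcov; destruct (HC F HF) as (l & Hl & Hcl).
  - intros y Hy; apply Hcov; exists y; split; [exact Hy | apply spec_refl].
  - exists l; split; [exact Hl |]; intros z (y & Hy & Hyz).
    destruct (Hcl y Hy) as (U & HU & HUy).
    exists U; split; [exact HU | exact (Hyz U (HF U (Hl U HU)) HUy)].
Qed.

Lemma upset_saturated C : saturated O (upset C).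
Proof. intros z w (y & Hy & Hyz) Hzw; exists y; split; [exact Hy | eapply spec_trans; eauto]. Qed.

Lemma sub_upset C : subset C (upset C).
Proof. intros y Hy; exists y; split; [exact Hy | apply spec_refl]. Qed.

Lemma upset_sub_open C U : O U -> subset C U -> subset (upset C) U.
Proof. intros HU HCU z (y & Hy & Hyz); exact (Hyz U HU (HCU y Hy)). Qed.

Lemma directed_list_bound (F : (X -> Prop) -> Prop) :
  (exists W, F W) ->
  (forall W1 W2, F W1 -> F W2 -> exists W3, F W3 /\ subset W1 W3 /\ subset W2 W3) ->
  forall l, (forall U, In U l -> F U) -> exists W, F W /\ forall U, In U l -> subset U W.
Proof.
  intros Hne Hdir l; induction l as [| V l IH]; intro Hl.
  - destruct Hne as (W & HW); exists W; split; [exact HW | intros U []].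
  - destruct IH as (W & HW & HlW); [intros U HU; apply Hl; right; exact HU |].
    destruct (Hdir V W (Hl V (or_introl eq_refl)) HW) as (W' & HW' & HVW' & HWW').
    exists W'; split; [exact HW' |]; intros U [<- | HU]; [exact HVW' |].
    intros x Hx; apply HWW', (HlW U HU), Hx.
Qed.

Lemma compact_sub_directed C F : compact O C ->
  (forall W, F W -> O W) -> (exists W, F W) ->
  (forall W1 W2, F W1 -> F W2 -> exists W3, F W3 /\ subset W1 W3 /\ subset W2 W3) ->
  subset C (bigU F) -> exists W, F W /\ subset C W.
Proof.
  intros HC HF Hne Hdir HCF; destruct (HC F HF HCF) as (l & Hl & Hcl).
  destruct (directed_list_bound F Hne Hdir l Hl) as (W & HW & HlW).
  exists W; split; [exact HW |]; intros x Hx.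
  destruct (Hcl x Hx) as (U & HU & HUx); exact (HlW U HU x HUx).
Qed.

Lemma cover_segment (F : (X -> Prop) -> Prop) (y : nat -> X) n N :
  (forall m, n <= m -> exists U, F U /\ U (y m)) ->
  exists l, (forall U, In U l -> F U) /\
    forall m, n <= m -> m < N -> exists U, In U l /\ U (y m).
Proof.
  intro Hcov; induction N as [| N (l & Hl & Hcl)].
  - exists nil; split; [intros U [] | intros m _ Hm; lia].
  - destruct (le_lt_dec n N) as [HnN | HNn].
    + destruct (Hcov N HnN) as (U & HU & HUy); exists (U :: l); split.
      * intros V [<- | HV]; auto.
      * intros m Hnm HmN; destruct (Nat.eq_dec m N) as [-> | Hne].
        -- exists U; split; [left |]; auto.
        -- destruct (Hcl m Hnm) as (V & HV & HVy); [lia |]; exists V; split; [right |]; auto.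
    + exists l; split; [exact Hl | intros m Hnm HmN; apply Hcl; lia].
Qed.

Lemma compact_union_tail_up A y n :
  compact O A -> converges_to y A -> compact O (fun z => A z \/ tail_up y n z).
Proof.
  intros HA Hy F HF Hcov.
  destruct (HA F HF) as (la & Hla & Hca); [intros x Hx; apply Hcov; auto |].
  destruct (Hy _ (open_list_union la (fun U HU => HF U (Hla U HU))) Hca) as (N & HN).
  destruct (cover_segment F y n N) as (lt & Hlt & Hct).
  { intros m Hm; apply Hcov; right; exists m; split; [exact Hm | apply spec_refl]. }
  exists (la ++ lt); split.
  - intros U HU; apply in_app_or in HU; destruct HU; auto.
  - intros z [Hz | (m & Hm & Hmz)].
    + destruct (Hca z Hz) as (U & HU & HUz); exists U; split; [apply in_or_app |]; auto.
    + destruct (le_lt_dec N m) as [HNm | HmN].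
      * destruct (HN m HNm) as (U & HU & HUy); exists U; split; [apply in_or_app; auto |].
        exact (Hmz U (HF U (Hla U HU)) HUy).
      * destruct (Hct m Hm HmN) as (U & HU & HUy); exists U; split; [apply in_or_app; auto |].
        exact (Hmz U (HF U (Hlt U HU)) HUy).
Qed.

Lemma inK_union_tail_up A y n :
  inK O A -> converges_to y A -> inK O (fun z => A z \/ tail_up y n z).
Proof.
  intros ((a & Ha) & HAc & HAs) Hy; split; [exists a; left; exact Ha | split].
  - apply compact_union_tail_up; assumption.
  - intros z w [Hz | (m & Hm & Hmz)] Hzw; [left; exact (HAs z w Hz Hzw) |].
    right; exists m; split; [exact Hm | eapply spec_trans; eauto].
Qed.

Lemma tail_up_antitone y n n' : n <= n' -> subset (tail_up y n') (tail_up y n).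
Proof. intros Hle z (m & Hm & Hmz); exists m; split; [lia | exact Hmz]. Qed.

Lemma directedK_antitone (K : nat -> X -> Prop) :
  (forall n, inK O (K n)) -> (forall n n', n <= n' -> subset (K n') (K n)) ->
  directedK O (fun A => exists n, A = K n).
Proof.
  intros HK Hdec; split; [| split].
  - intros A (n & ->); apply HK.
  - exists (K 0), 0; reflexivity.
  - intros A1 A2 (n1 & ->) (n2 & ->); exists (K (max n1 n2)).
    split; [exists (max n1 n2); reflexivity | split; apply Hdec; lia].
Qed.

Lemma is_supK_union_tails B y : inK O B -> converges_to y B ->
  is_supK O (fun A => exists n, A = (fun z => B z \/ tail_up y n z)) B.
Proof.
  intros HB Hy; split; [exact HB | split].
  - intros A (n & ->) z Hz; left; exact Hz.
  - intros L _ HL z Hz; apply NNPP; intro HBz.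
    destruct (saturated_separate B z (proj2 (proj2 HB)) HBz) as (W & HW & HBW & HWz).
    destruct (Hy W HW HBW) as (N & HN).
    destruct (HL _ (ex_intro _ N eq_refl) z Hz) as [HBz' | (m & Hm & Hmz)].
    + exact (HBz HBz').
    + exact (HWz (Hmz W HW (HN m Hm))).
Qed.

Lemma way_below_union_tail A B y : inK O B -> converges_to y B -> way_belowK O A B ->
  exists n, subset (fun z => B z \/ tail_up y n z) A.
Proof.
  intros HB Hy Hwb.
  assert (HD : directedK O (fun K => exists n, K = (fun z => B z \/ tail_up y n z))).
  { apply (directedK_antitone (fun n z => B z \/ tail_up y n z)).
    - intro n; exact (inK_union_tail_up B y n HB Hy).
    - intros n n' Hle z [Hz | Hz]; [left; exact Hz |].
      right; exact (tail_up_antitone y n n' Hle z Hz). }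
  destruct (Hwb _ B HD (is_supK_union_tails B y HB Hy) (fun x Hx => Hx)) as (K & (n & ->) & Hn).
  exists n; exact Hn.
Qed.

Lemma supK_contains_inter D S : directedK O D -> is_supK O D S ->
  forall y, (forall A, D A -> A y) -> S y.
Proof.
  intros (HD & _ & _) (_ & _ & Hl) y Hy.
  apply (Hl (up O y) (up_inK y)); [| apply spec_refl].
  intros A HA z Hz; destruct (HD A HA) as (_ & _ & Hs); exact (Hs y z (Hy A HA) Hz).
Qed.

Lemma is_supK_inter_of_wf D : well_filtered O -> directedK O D ->
  is_supK O D (fun x => forall A, D A -> A x).
Proof.
  intros WF HD; pose proof HD as (HDK & _ & _).
  split; [split; [| split] | split].
  - apply NNPP; intro Hn.
    destruct (WF (fun _ => False) D open_empty HD) as (A & HA & HAe).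
    + intros x Hx; apply Hn; exists x; exact Hx.
    + destruct (HDK A HA) as ((a & Ha) & _); exact (HAe a Ha).
  - intros F HF Hcov; destruct (WF (bigU F) D (open_bigU F HF) HD) as (A & HA & HAF).
    + intros x Hx; apply Hcov, Hx.
    + destruct (HDK A HA) as (_ & HAc & _); destruct (HAc F HF HAF) as (l & Hl & Hcl).
      exists l; split; [exact Hl | intros x Hx; apply Hcl, Hx, HA].
  - intros x y Hx Hxy A HA; destruct (HDK A HA) as (_ & _ & Hs); exact (Hs x y (Hx A HA) Hxy).
  - intros A HA x Hx; exact (Hx A HA).
  - intros L _ HL x Hx A HA; exact (HL A HA x Hx).
Qed.

Lemma way_below_of_interior A B : well_filtered O ->
  subset B (interior O A) -> way_belowK O A B.
Proof.
  intros WF HBA D S HD HS HSB.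
  destruct (WF (interior O A) D (interior_open A) HD) as (d & Hd & Hdi).
  - intros x Hx; apply HBA, HSB; exact (supK_contains_inter D S HD HS x Hx).
  - exists d; split; [exact Hd | intros x Hx; apply interior_sub, Hdi, Hx].
Qed.

Lemma smyth_open_box W : O W -> smyth_open O (fun L => inK O L /\ subset L W).
Proof.
  intro HW; split; [intros A (HA & _); exact HA |].
  intros K (_ & HKW); exists W; split; [exact HW | split; [exact HKW |]].
  intros L HL HLW; split; assumption.
Qed.

Lemma smyth_nbhd_base B : smyth_first_countable O -> inK O B ->
  exists U : nat -> X -> Prop,
    (forall n, O (U n) /\ subset B (U n)) /\
    (forall n n', n <= n' -> subset (U n') (U n)) /\
    (forall W, O W -> subset B W -> exists n, subset (U n) W).
Proof.
  intros FC HB; destruct (FC B HB) as (Bn & HBn & Hbase).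
  destruct (choice
    (fun n V => O V /\ subset B V /\ forall L, inK O L -> subset L V -> Bn n L)) as (V & HV).
  { intro n; destruct (HBn n) as ((_ & Hsm) & HBBn).
    destruct (Hsm B HBBn) as (V & HV); exists V; exact HV. }
  set (U := fun n x => forall k, k <= n -> V k x).
  assert (HUo : forall n, O (U n)).
  { induction n as [| n IH].
    - apply (open_ext (V 0)); [apply HV |]; intro x; split.
      + intros Hx k Hk; replace k with 0 by lia; exact Hx.
      + intro Hx; apply Hx; lia.
    - apply (open_ext _ _ (open_and _ _ IH (proj1 (HV (S n))))); intro x; split.
      + intros (Hx & HxS) k Hk; destruct (Nat.eq_dec k (S n)) as [-> | Hne]; [exact HxS |].
        apply Hx; lia.
      + intro Hx; split; [intros k Hk; apply Hx; lia | apply Hx; lia]. }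
  exists U; split; [| split].
  - intro n; split; [apply HUo | intros x Hx k _; apply HV, Hx].
  - intros n n' Hle x Hx k Hk; apply Hx; lia.
  - intros W HW HBW; destruct (Hbase _ (smyth_open_box W HW) (conj HB HBW)) as (n & Hn).
    exists n; intros x Hx.
    assert (HxV : subset (up O x) (V n)).
    { intros z Hxz; exact (Hxz (V n) (proj1 (HV n)) (Hx n (le_n n))). }
    apply (proj2 (Hn (up O x) (proj2 (proj2 (HV n)) (up O x) (up_inK x) HxV))), spec_refl.
Qed.

Lemma interior_of_way_below A B : smyth_first_countable O -> inK O B ->
  way_belowK O A B -> subset B (interior O A).
Proof.
  intros FC HB Hwb.
  destruct (smyth_nbhd_base B FC HB) as (U & HU & Hdec & Hbase).
  assert (HUA : exists n, subset (U n) A).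
  { apply NNPP; intro Hno.
    destruct (choice (fun n x => U n x /\ ~ A x)) as (y & Hy).
    { intro n; apply NNPP; intro Hn; apply Hno; exists n.
      intros x Hx; apply NNPP; intro HAx; apply Hn; exists x; auto. }
    assert (Hconv : converges_to y B).
    { intros W HW HBW; destruct (Hbase W HW HBW) as (N & HN).
      exists N; intros m Hm; apply HN, (Hdec N m Hm), Hy. }
    destruct (way_below_union_tail A B y HB Hconv Hwb) as (n & Hn).
    apply (proj2 (Hy n)), Hn; right; exists n; split; [apply le_n | apply spec_refl]. }
  destruct HUA as (n & Hn); intros x Hx.
  exists (U n); split; [apply HU | split; [apply HU, Hx | exact Hn]].
Qed.

Lemma property_Q_of_wf_fc : well_filtered O -> smyth_first_countable O -> property_Q O.
Proof.
  intros WF FC A B _ HB; split.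
  - exact (interior_of_way_below A B FC HB).
  - exact (way_below_of_interior A B WF).
Qed.

Lemma compact_sandwich_list (l : list (X -> Prop)) U :
  (forall V, In V l -> exists C, compact O C /\ subset V C /\ subset C U) ->
  exists C, compact O C /\ subset (fun x => exists V, In V l /\ V x) C /\ subset C U.
Proof.
  induction l as [| V l IH]; intro Hl.
  - exists (fun _ => False); split; [apply compact_empty |].
    split; [intros x (V & [] & _) | intros x []].
  - destruct IH as (C & HC & HlC & HCU); [intros W HW; apply Hl; right; exact HW |].
    destruct (Hl V (or_introl eq_refl)) as (C' & HC' & HVC' & HC'U).
    exists (fun x => C' x \/ C x); split; [apply compact_or; assumption | split].
    + intros x (W & [<- | HW] & Hx); [left; auto | right; apply HlC; exists W; auto].
    + intros x [Hx | Hx]; auto.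
Qed.

Lemma lc_compact_between K U : locally_compact O -> inK O K -> O U -> subset K U ->
  exists L, inK O L /\ subset K (interior O L) /\ subset L U.
Proof.
  intros LC ((k & Hk) & HKc & _) HU HKU.
  set (Fam := fun V => O V /\ exists C, compact O C /\ subset V C /\ subset C U).
  destruct (HKc Fam) as (l & Hl & Hcov).
  - intros V (HV & _); exact HV.
  - intros x Hx; destruct (LC x U HU (HKU x Hx)) as (V & C & HV & HVx & HVC & HC & HCU).
    exists V; split; [split; [exact HV | exists C; auto] | exact HVx].
  - destruct (compact_sandwich_list l U) as (C & HC & HlC & HCU).
    { intros V HV; apply Hl, HV. }
    exists (upset C); split; [split; [| split] | split].
    + destruct (Hcov k Hk) as (V & HV & HVk); exists k; apply sub_upset, HlC; exists V; auto.
    + apply compact_upset, HC.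
    + apply upset_saturated.
    + intros x Hx; destruct (Hcov x Hx) as (V & HV & HVx).
      exists V; split; [apply (Hl V HV) | split; [exact HVx |]].
      intros y Hy; apply sub_upset, HlC; exists V; auto.
    + apply upset_sub_open; assumption.
Qed.

Lemma continuousK_of_lc : well_filtered O -> smyth_first_countable O ->
  locally_compact O -> continuousK O.
Proof.
  intros WF FC LC; pose proof (property_Q_of_wf_fc WF FC) as HQ.
  split; [intros D HD; eexists; exact (is_supK_inter_of_wf D WF HD) |].
  intros K HK.
  assert (Happrox : forall L, inK O L /\ way_belowK O L K <-> inK O L /\ subset K (interior O L)).
  { intro L; split; intros (HL & H); split; auto; apply (HQ L K HL HK); exact H. }
  split; [split; [| split] | split; [exact HK | split]].
  - intros L (HL & _); exact HL.
  - destruct (lc_compact_between K (fun _ => True) LC HK open_full) as (L & HL & HKL & _).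
    { intros x _; exact I. }
    exists L; apply Happrox; auto.
  - intros L1 L2 H1 H2.
    destruct (proj1 (Happrox L1) H1) as (_ & HK1), (proj1 (Happrox L2) H2) as (_ & HK2).
    destruct (lc_compact_between K (fun x => interior O L1 x /\ interior O L2 x) LC HK)
      as (L3 & HL3 & HKL3 & HL3U).
    { apply open_and; apply interior_open. }
    { intros x Hx; split; auto. }
    exists L3; split; [apply Happrox; auto |].
    split; intros x Hx; apply interior_sub, HL3U, Hx.
  - intros L HL; destruct (proj1 (Happrox L) HL) as (_ & HKL).
    intros x Hx; apply interior_sub, HKL, Hx.
  - intros M _ HML z Hz; apply NNPP; intro HKz.
    destruct (saturated_separate K z (proj2 (proj2 HK)) HKz) as (W & HW & HKW & HWz).
    destruct (lc_compact_between K W LC HK HW HKW) as (L & HL & HKL & HLW).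
    apply HWz, HLW, (HML L); [apply Happrox; auto | exact Hz].
Qed.

Lemma lc_of_continuousK : well_filtered O -> smyth_first_countable O ->
  continuousK O -> locally_compact O.
Proof.
  intros WF FC (_ & Happrox) x U HU HUx.
  destruct (Happrox (up O x) (up_inK x)) as (HD & HS).
  destruct (WF U _ HU HD) as (L & (HL & Hwb) & HLU).
  { intros y Hy; exact (supK_contains_inter _ _ HD HS y Hy U HU HUx). }
  destruct (interior_of_way_below L (up O x) FC (up_inK x) Hwb x (spec_refl x))
    as (V & HV & HVx & HVL).
  exists V, L; split; [exact HV | split; [exact HVx | split; [exact HVL |]]].
  split; [apply HL | exact HLU].
Qed.

Lemma xi_sigma_of_continuousK : smyth_first_countable O -> continuousK O ->
  xi_sigma_continuous O.
Proof.
  intros FC (_ & Happrox) W (_ & HWup & HWsup); apply open_of_nbhds; intros x Hx.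
  destruct (Happrox (up O x) (up_inK x)) as (HD & HS).
  destruct (HWsup _ _ HD HS Hx) as (L & (HL & Hwb) & HWL).
  destruct (interior_of_way_below L (up O x) FC (up_inK x) Hwb x (spec_refl x))
    as (V & HV & HVx & HVL).
  exists V; split; [exact HV | split; [exact HVx |]].
  intros y Hy; apply (HWup L); [exact HWL | apply up_inK |].
  intros z Hyz; destruct HL as (_ & _ & HLs); exact (HLs y z (HVL y Hy) Hyz).
Qed.

Lemma core_compact_of_lc : locally_compact O -> core_compact O.
Proof.
  intros LC U HU x; split.
  - intro Hx; destruct (LC x U HU Hx) as (V & K & HV & HVx & HVK & HK & HKU).
    exists V; split; [exact HV | split; [| exact HVx]].
    intros F HF Hne Hdir HUF.
    destruct (compact_sub_directed K F HK HF Hne Hdir) as (W & HW & HKW).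
    { intros y Hy; apply HUF, HKU, Hy. }
    exists W; split; [exact HW | intros y Hy; apply HKW, HVK, Hy].
  - intros (V & HV & Hwb & HVx).
    destruct (Hwb (fun W => W = U)) as (W & -> & HVU).
    + intros W ->; exact HU.
    + exists U; reflexivity.
    + intros W1 W2 -> ->; exists U; split; [reflexivity | split; intros y Hy; exact Hy].
    + intros y Hy; exists U; auto.
    + apply HVU, HVx.
Qed.

Lemma way_belowO_chain V U C : way_belowO O V U ->
  (forall A, C A -> O A) -> (exists A, C A) ->
  (forall A B, C A -> C B -> subset A B \/ subset B A) ->
  subset U (bigU C) -> exists A, C A /\ subset V A.
Proof.
  intros Hwb HC Hne Htot HUC; apply (Hwb C HC Hne); [| exact HUC].
  intros A B HA HB; destruct (Htot A B HA HB) as [HAB | HBA].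
  - exists B; split; [exact HB | split; [exact HAB | intros x Hx; exact Hx]].
  - exists A; split; [exact HA | split; [intros x Hx; exact Hx | exact HBA]].
Qed.

Lemma way_belowO_sub V U : O U -> way_belowO O V U -> subset V U.
Proof.
  intros HU Hwb; destruct (way_belowO_chain V U (fun W => W = U) Hwb) as (W & -> & HVU).
  - intros W ->; exact HU.
  - exists U; reflexivity.
  - intros A B -> ->; left; intros x Hx; exact Hx.
  - intros x Hx; exists U; auto.
  - exact HVU.
Qed.

Lemma way_belowO_mono V V' U' U : subset V V' -> way_belowO O V' U' -> subset U' U ->
  way_belowO O V U.
Proof.
  intros HVV' Hwb HU'U F HF Hne Hdir HUF.
  destruct (Hwb F HF Hne Hdir) as (W & HW & HV'W); [intros x Hx; apply HUF, HU'U, Hx |].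
  exists W; split; [exact HW | intros x Hx; apply HV'W, HVV', Hx].
Qed.

Lemma way_belowO_or V1 V2 U : way_belowO O V1 U -> way_belowO O V2 U ->
  way_belowO O (fun x => V1 x \/ V2 x) U.
Proof.
  intros H1 H2 F HF Hne Hdir HUF.
  destruct (H1 F HF Hne Hdir HUF) as (W1 & HW1 & HV1).
  destruct (H2 F HF Hne Hdir HUF) as (W2 & HW2 & HV2).
  destruct (Hdir W1 W2 HW1 HW2) as (W & HW & HW1W & HW2W).
  exists W; split; [exact HW | intros x [Hx | Hx]; [apply HW1W, HV1, Hx | apply HW2W, HV2, Hx]].
Qed.

Lemma way_belowO_empty U : way_belowO O (fun _ => False) U.
Proof. intros F _ (W & HW) _ _; exists W; split; [exact HW | intros x []]. Qed.

Lemma way_belowO_finite_cover V U H : way_belowO O V U -> (forall h, H h -> O h) ->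
  subset U (bigU H) ->
  exists l, (forall h, In h l -> H h) /\ subset V (fun x => exists h, In h l /\ h x).
Proof.
  intros Hwb HH HUH.
  set (F := fun W => exists l, (forall h, In h l -> H h) /\ W = (fun x => exists h, In h l /\ h x)).
  destruct (Hwb F) as (W & (l & Hl & ->) & HVl).
  - intros W (l & Hl & ->); apply open_list_union; intros h Hh; exact (HH h (Hl h Hh)).
  - exists (fun x => exists h, In h nil /\ h x), nil; split; [intros h [] | reflexivity].
  - intros W1 W2 (l1 & Hl1 & ->) (l2 & Hl2 & ->).
    exists (fun x => exists h, In h (l1 ++ l2) /\ h x); split.
    + exists (l1 ++ l2); split; [| reflexivity].
      intros h Hh; apply in_app_or in Hh; destruct Hh; auto.
    + split; intros x (h & Hh & Hx); exists h; split; auto; apply in_or_app; auto.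
  - intros x Hx; destruct (HUH x Hx) as (h & Hh & Hhx).
    exists (fun x => exists h', In h' (h :: nil) /\ h' x); split.
    + exists (h :: nil); split; [intros h' [<- | []]; exact Hh | reflexivity].
    + exists h; split; [left; reflexivity | exact Hhx].
  - exists l; split; assumption.
Qed.

Lemma way_belowO_interpolate V U : core_compact O -> O U -> way_belowO O V U ->
  exists W, O W /\ way_belowO O V W /\ way_belowO O W U.
Proof.
  intros CC HU Hwb.
  set (F := fun A => O A /\ exists W, O W /\ way_belowO O A W /\ way_belowO O W U).
  destruct (Hwb F) as (A & (HA & W & HW & HAW & HWU) & HVA).
  - intros A (HA & _); exact HA.
  - exists (fun _ => False); split; [exact open_empty |].
    exists (fun _ => False); split; [exact open_empty | split; apply way_belowO_empty].
  - intros A1 A2 (HA1 & W1 & HW1 & HA1W1 & HW1U) (HA2 & W2 & HW2 & HA2W2 & HW2U).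
    exists (fun x => A1 x \/ A2 x).
    split; [split; [apply open_or; assumption |] | split; intros x Hx; auto].
    exists (fun x => W1 x \/ W2 x); split; [apply open_or; assumption |].
    split; [| apply way_belowO_or; assumption].
    apply way_belowO_or; [apply (way_belowO_mono A1 A1 W1) | apply (way_belowO_mono A2 A2 W2)];
      auto; intros x Hx; auto.
  - intros x Hx; destruct (proj1 (CC U HU x) Hx) as (W & HW & HWU & HWx).
    destruct (proj1 (CC W HW x) HWx) as (A & HA & HAW & HAx).
    exists A; split; [split; [exact HA | exists W; auto] | exact HAx].
  - exists W; split; [exact HW | split; [| exact HWU]].
    exact (way_belowO_mono V A W W HVA HAW (fun x Hx => Hx)).
Qed.

Lemma way_belowO_descending_sequence V U : core_compact O -> O U -> way_belowO O V U ->
  exists Z : nat -> X -> Prop, Z 0 = U /\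
    forall n, O (Z n) /\ way_belowO O V (Z n) /\ way_belowO O (Z (S n)) (Z n).
Proof.
  intros CC HU HVU.
  destruct (choice (fun W W' => O W -> way_belowO O V W ->
      O W' /\ way_belowO O V W' /\ way_belowO O W' W)) as (g & Hg).
  { intro W; destruct (classic (O W /\ way_belowO O V W)) as [(HW & HVW) | Hn].
    - destruct (way_belowO_interpolate V W CC HW HVW) as (W' & HW'); exists W'; auto.
    - exists W; intros HW HVW; exfalso; auto. }
  set (Z := fun n => Nat.iter n g U).
  assert (HZ : forall n, O (Z n) /\ way_belowO O V (Z n)).
  { induction n as [| n (HZn & HVZn)]; [split; assumption |].
    destruct (Hg (Z n) HZn HVZn) as (HZS & HVZS & _); split; assumption. }
  exists Z; split; [reflexivity |]; intro n; destruct (HZ n) as (HZn & HVZn).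
  split; [exact HZn | split; [exact HVZn | exact (proj2 (proj2 (Hg (Z n) HZn HVZn)))]].
Qed.

Lemma zorn_union_closed (Fam : (X -> Prop) -> Prop) :
  (forall F, (forall A, F A -> Fam A) ->
     (forall A B, F A -> F B -> subset A B \/ subset B A) -> Fam (bigU F)) ->
  exists M, Fam M /\ forall B, Fam B -> subset M B -> subset B M.
Proof.
  intro Hch; destruct (@classical_sets.Zorn_bigcup X Fam) as (M & HM & Hmax).
  - intros F HF Htot.
    replace (classical_sets.bigcup F (fun A => A)) with (bigU F); [exact (Hch F HF Htot) |].
    apply functional_extensionality; intro x; apply propositional_extensionality; split.
    + intros (A & HA & Hx); exists A; assumption.
    + intros [A HA Hx]; exists A; split; assumption.
  - exists M; split; [exact HM |]; intros B HB HMB; apply NNPP; intro HBM.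
    exact (Hmax B (conj HMB HBM) HB).
Qed.

Lemma maximal_open_avoiding (Z : nat -> X -> Prop) G :
  (forall n, O (Z n) /\ way_belowO O (Z (S n)) (Z n)) -> O G -> (forall n, ~ subset (Z n) G) ->
  exists P, O P /\ subset G P /\ (forall n, ~ subset (Z n) P) /\
    forall W, O W -> (exists y, W y /\ ~ P y) -> exists j, subset (Z j) (fun z => W z \/ P z).
Proof.
  intros HZ HG HZG.
  (* Taking [A ∪ G] instead of open supersets of [G] admits the empty chain. *)
  set (Fam := fun A => O A /\ forall n, ~ subset (Z n) (fun z => A z \/ G z)).
  destruct (zorn_union_closed Fam) as (M & (HM & HZM) & Hmax).
  - intros F HF Htot; split; [apply open_bigU; intros A HA; apply HF, HA |].
    intros n HZn.
    destruct (way_belowO_chain (Z (S n)) (Z n)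
                (fun W => W = G \/ exists A, F A /\ W = (fun z => A z \/ G z)) (proj2 (HZ n)))
      as (W & [-> | (A & HA & ->)] & HW).
    + intros W [-> | (A & HA & ->)]; [exact HG | apply open_or; [apply HF, HA | exact HG]].
    + exists G; left; reflexivity.
    + intros W1 W2 [-> | (A1 & HA1 & ->)] [-> | (A2 & HA2 & ->)].
      * left; intros z Hz; exact Hz.
      * left; intros z Hz; right; exact Hz.
      * right; intros z Hz; right; exact Hz.
      * destruct (Htot A1 A2 HA1 HA2) as [H | H]; [left | right];
          intros z [Hz | Hz]; auto; left; apply H, Hz.
    + intros z Hz; destruct (HZn z Hz) as [(A & HA & Hz') | Hz'].
      * exists (fun z => A z \/ G z); split; [right; exists A; auto | left; exact Hz'].
      * exists G; split; [left; reflexivity | exact Hz'].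
    + exact (HZG (S n) HW).
    + exact (proj2 (HF A HA) (S n) HW).
  - exists (fun z => M z \/ G z); split; [apply open_or; assumption |].
    split; [intros z Hz; right; exact Hz | split; [exact HZM |]].
    intros W HW (y & HWy & HPy); apply NNPP; intro Hno.
    assert (HFam : Fam (fun z => W z \/ M z)).
    { split; [apply open_or; assumption |].
      intros n Hn; apply Hno; exists n; intros z Hz.
      destruct (Hn z Hz) as [[H | H] | H]; auto. }
    apply HPy; left; apply (Hmax _ HFam); [intros z Hz; right; exact Hz | left; exact HWy].
Qed.

Lemma inter_not_sub_of_maximal_avoiding (Z : nat -> X -> Prop) P : well_filtered O ->
  (forall n, O (Z n)) -> (forall n n', n <= n' -> subset (Z n') (Z n)) ->
  O P -> (forall n, ~ subset (Z n) P) ->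
  (forall W, O W -> (exists y, W y /\ ~ P y) -> exists j, subset (Z j) (fun z => W z \/ P z)) ->
  exists p, (forall n, Z n p) /\ ~ P p.
Proof.
  intros WF HZ Hdec HP HZP Hmax.
  destruct (choice (fun n x => Z n x /\ ~ P x)) as (y & Hy).
  { intro n; apply NNPP; intro Hn; apply (HZP n).
    intros x Hx; apply NNPP; intro HPx; apply Hn; exists x; auto. }
  (* By maximality of [P], the sequence converges to each of its own terms. *)
  assert (Hconv : forall n, converges_to y (up O (y n))).
  { intros n W HW HyW.
    destruct (Hmax W HW) as (j & Hj); [exists (y n); split; [apply HyW, spec_refl | apply Hy] |].
    exists j; intros m Hm.
    destruct (Hj (y m) (Hdec j m Hm _ (proj1 (Hy m)))) as [H | H]; [exact H |].
    destruct (proj2 (Hy m) H). }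
  assert (Htail : forall n, inK O (tail_up y n)).
  { intro n; apply (inK_ext (fun z => up O (y n) z \/ tail_up y n z)).
    - intro z; split; [intros [H | H] | intro H; right; exact H]; [| exact H].
      exists n; split; [apply le_n | exact H].
    - exact (inK_union_tail_up _ y n (up_inK (y n)) (Hconv n)). }
  apply NNPP; intro Hno.
  destruct (WF P _ HP (directedK_antitone (tail_up y) Htail (tail_up_antitone y)))
    as (T & (n & ->) & HTP).
  - intros x Hx; apply NNPP; intro HPx; apply Hno; exists x; split; [| exact HPx].
    intro n; destruct (Hx _ (ex_intro _ n eq_refl)) as (m & Hm & Hmx).
    exact (Hmx (Z n) (HZ n) (Hdec n m Hm _ (proj1 (Hy m)))).
  - apply (proj2 (Hy n)), HTP; exists n; split; [apply le_n | apply spec_refl].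
Qed.

Lemma compact_inter_way_below_chain (Z : nat -> X -> Prop) : well_filtered O ->
  (forall n, O (Z n) /\ way_belowO O (Z (S n)) (Z n)) -> compact O (fun x => forall n, Z n x).
Proof.
  intros WF HZ H HH Hcov.
  assert (Hdec : forall n n', n <= n' -> subset (Z n') (Z n)).
  { intros n n' Hle; induction Hle as [| m Hle IH]; intros x Hx; [exact Hx |].
    apply IH, (way_belowO_sub _ _ (proj1 (HZ m)) (proj2 (HZ m))), Hx. }
  assert (HZG : exists n, subset (Z n) (bigU H)).
  { apply NNPP; intro Hno.
    destruct (maximal_open_avoiding Z (bigU H) HZ (open_bigU H HH)) as (P & HP & HGP & HZP & Hmax).
    { intros n Hn; apply Hno; exists n; exact Hn. }
    destruct (inter_not_sub_of_maximal_avoiding Z P WF (fun n => proj1 (HZ n)) Hdec HP HZP Hmax)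
      as (p & Hp & HPp).
    exact (HPp (HGP p (Hcov p Hp))). }
  destruct HZG as (n & Hn).
  destruct (way_belowO_finite_cover _ _ H (proj2 (HZ n)) HH Hn) as (l & Hl & Hcl).
  exists l; split; [exact Hl | intros x Hx; apply Hcl, Hx].
Qed.

Lemma lc_of_core_compact : well_filtered O -> core_compact O -> locally_compact O.
Proof.
  intros WF CC x U HU Hx.
  destruct (proj1 (CC U HU x) Hx) as (V & HV & HVU & HVx).
  destruct (way_belowO_descending_sequence V U CC HU HVU) as (Z & HZ0 & HZ).
  exists V, (fun y => forall n, Z n y); split; [exact HV | split; [exact HVx | split; [| split]]].
  - intros y Hy n; exact (way_belowO_sub V (Z n) (proj1 (HZ n)) (proj1 (proj2 (HZ n))) y Hy).
  - apply compact_inter_way_below_chain; [exact WF | intro n; split; apply HZ].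
  - intros y Hy; rewrite <- HZ0; apply Hy.
Qed.

End Topology.

Theorem mainTheorem10 (X : Type) (O : (X -> Prop) -> Prop) :
  is_topology O -> T0 O -> well_filtered O -> smyth_first_countable O ->
  (locally_compact O <-> (continuousK O /\ xi_sigma_continuous O)) /\
  ((continuousK O /\ xi_sigma_continuous O) <-> (continuousK O /\ property_Q O)) /\
  ((continuousK O /\ property_Q O) <-> continuousK O) /\
  (continuousK O <-> core_compact O).
Proof.
  intros HT _ WF FC.
  pose proof (property_Q_of_wf_fc X O HT WF FC) as HQ.
  pose proof (continuousK_of_lc X O HT WF FC) as C_of_LC.
  pose proof (lc_of_continuousK X O HT WF FC) as LC_of_C.
  pose proof (xi_sigma_of_continuousK X O HT FC) as XI_of_C.
  split; [| split; [| split]].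
  - split; [intro LC; split; auto | intros (C & _); auto].
  - split; intros (C & _); split; auto.
  - split; [intros (C & _); exact C | intro C; split; auto].
  - split; [intro C; exact (core_compact_of_lc X O (LC_of_C C)) |].
    intro CC; exact (C_of_LC (lc_of_core_compact X O HT WF CC)).
Qed.
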